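(* Let $(V,\le,\preccurlyeq)$ be a mixed lattice vector space such that $(V,\le)$ is a lattice (a Riesz space). If $\tau$ is a locally symmetric-solid vector topology on $V$, then $\tau$ is a locally solid Riesz space topology on $(V,\le)$.
   Context: A mixed lattice vector space $(V,\le,\preccurlyeq)$ is a real vector space $V$ with two partial orderings $\le$ (initial order) and $\preccurlyeq$ (specific order), each making $V$ a partially ordered vector space, with positive cones $V_p=\{x:0\le x\}$, $V_{sp}=\{x:0\preccurlyeq x\}$, such that: (1) for all $x,y$ the elements $x\curlyvee y=\min\{w: w\succcurlyeq x,\ w\ge y\}$ and $x\curlywedge y=\max\{w: w\preccurlyeq x,\ w\le y\}$ exist (min/max with respect to $\le$); (2) $x\preccurlyeq y$ implies $x\le y$; (3) $x\curlyvee y, x\curlywedge y\in V_{sp}$ whenever $x,y\in V_{sp}$. Notation: $x^u=0\curlyvee x$, $x^l=0\curlyvee(-x)$, $s(x)=x^u+x^l$. A set $A$ is symmetric-solid if $x\in A$ and $s(y)\le s(x)$ imply $y\in A$; a vector topology is locally symmetric-solid if it has a base at zero of symmetric-solid sets. A locally solid Riesz space topology on $(V,\le)$ is a vector topology with a base at zero of sets $S$ such that $y\in S$ and $|x|\le|y|$ imply $x\in S$, where $|\cdot|$ is the lattice absolute value of $(V,\le)$. *)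

From HB Require Import structures.
From mathcomp Require Import all_boot all_order all_algebra.
From mathcomp Require Import all_classical all_reals all_analysis.
Set Implicit Arguments. Unset Strict Implicit. Unset Printing Implicit Defensive.
Import Order.TTheory GRing.Theory Num.Theory.
Local Open Scope classical_set_scope.
Local Open Scope ring_scope.

Section Defs.
Variables (R : realType) (V : lmodType R).
Implicit Types (le sle : V -> V -> Prop) (x y z w : V).

Definition povs le :=
  [/\ (forall x, le x x),
      (forall x y, le x y -> le y x -> x = y),
      (forall x y z, le x y -> le y z -> le x z),
      (forall x y z, le x y -> le (x + z) (y + z)) &
      (forall (a : R) x y, 0 <= a -> le x y -> le (a *: x) (a *: y))].

Definition is_mixed_upper le sle x y w :=
  [/\ sle x w, le y w & forall w', sle x w' -> le y w' -> le w w'].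

Definition is_mixed_lower le sle x y w :=
  [/\ sle w x, le w y & forall w', sle w' x -> le w' y -> le w' w].

Definition mixed_lattice_vs le sle :=
  [/\ povs le /\ povs sle,
      (forall x y, exists w, is_mixed_upper le sle x y w),
      (forall x y, exists w, is_mixed_lower le sle x y w),
      (forall x y, sle x y -> le x y) &
      (forall x y, sle 0 x -> sle 0 y ->
         (forall w, is_mixed_upper le sle x y w -> sle 0 w) /\
         (forall w, is_mixed_lower le sle x y w -> sle 0 w))].

Definition is_s le sle x s := exists u l,
  [/\ is_mixed_upper le sle 0 x u, is_mixed_upper le sle 0 (- x) l & s = u + l].

Definition symmetric_solid le sle (A : set V) :=
  forall x y sx sy, A x -> is_s le sle x sx -> is_s le sle y sy ->
    le sy sx -> A y.

Definition is_sup le x y w :=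
  [/\ le x w, le y w & forall w', le x w' -> le y w' -> le w w'].
Definition is_inf le x y w :=
  [/\ le w x, le w y & forall w', le w' x -> le w' y -> le w' w].
Definition is_lattice le :=
  (forall x y, exists w, is_sup le x y w) /\ (forall x y, exists w, is_inf le x y w).

Definition solid le (S : set V) :=
  forall x y ax ay, is_sup le x (- x) ax -> is_sup le y (- y) ay ->
    S y -> le ax ay -> S x.

End Defs.

Definition has_zero_base (R : realType) (V : topologicalLmodType R)
  (P : set V -> Prop) :=
  forall U : set V, nbhs (0 : V) U -> exists S : set V, [/\ nbhs (0 : V) S, P S & S `<=` U].

From HB Require Import structures.
From mathcomp Require Import all_boot all_order all_algebra.
From mathcomp Require Import all_classical all_reals all_analysis.
Local Open Scope classical_set_scope.
Local Open Scope ring_scope.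
Import GRing.Theory.

Set Implicit Arguments.
Unset Strict Implicit.

(* Let B be a symmetric-solid neighbourhood of 0 with B + B inside a given
   symmetric-solid neighbourhood A, and let S be the solid hull of B.  If
   |x| <= |y| with y in B, then s(y) is in B and, since 0 ≼ s(y) and
   x, -x <= |x| <= |y| <= s(y), minimality of x^u and x^l gives
   s(x) <= 2 s(y) = s(2 s(y)); as 2 s(y) is in A, so is x. *)

Section PartiallyOrderedVectorSpace.
Variables (R : realType) (V : lmodType R) (le : V -> V -> Prop).
Hypothesis le_povs : povs le.

Lemma povs_refl (x : V) : le x x.
Proof. by case: le_povs. Qed.

Lemma povs_anti (x y : V) : le x y -> le y x -> x = y.
Proof. by case: le_povs => _ anti _ _ _; apply: anti. Qed.

Lemma povs_trans (y x z : V) : le x y -> le y z -> le x z.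
Proof. by case: le_povs => _ _ trans _ _; apply: trans. Qed.

Lemma povs_addr (x y z : V) : le x y -> le (x + z) (y + z).
Proof. by case: le_povs => _ _ _ addr _; apply: addr. Qed.

Lemma povs_add (a b c d : V) : le a b -> le c d -> le (a + c) (b + d).
Proof.
move=> lab lcd; apply: (povs_trans (povs_addr c lab)).
by rewrite ![b + _]addrC; apply: povs_addr.
Qed.

Lemma povs_add_ge0 (x y : V) : le 0 x -> le 0 y -> le 0 (x + y).
Proof. by move=> x0 y0; rewrite -[0]addr0; apply: povs_add. Qed.

Lemma is_sup_unique (x y a b : V) : is_sup le x y a -> is_sup le x y b -> a = b.
Proof.
by move=> [xa ya supa] [xb yb supb]; apply: povs_anti; [apply: supa|apply: supb].
Qed.

End PartiallyOrderedVectorSpace.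

Section MixedLatticeVectorSpace.
Variables (R : realType) (V : lmodType R) (le sle : V -> V -> Prop).
Hypotheses (le_povs : povs le) (sle_povs : povs sle).
Hypothesis sle_le : forall x y, sle x y -> le x y.
Hypothesis mixed_upper_ex : forall x y, exists w, is_mixed_upper le sle x y w.

Lemma is_s_exists (x : V) : exists s, is_s le sle x s.
Proof.
have [u xu] := mixed_upper_ex 0 x; have [l xl] := mixed_upper_ex 0 (- x).
by exists (u + l), u, l.
Qed.

Lemma is_s_ge0 (x s : V) : is_s le sle x s -> sle 0 s.
Proof. by move=> [u [l [[u0 _ _] [l0 _ _] ->]]]; apply: (povs_add_ge0 sle_povs). Qed.

Lemma is_s_id (z : V) : sle 0 z -> is_s le sle z z.
Proof.
move=> z0; exists z, 0; split; last by rewrite addr0.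
  by split=> [//| |w _ //]; exact: (povs_refl le_povs).
split; [exact: (povs_refl sle_povs)| |by move=> w /sle_le].
by have := povs_addr le_povs (- z) (sle_le z0); rewrite add0r subrr.
Qed.

Lemma abs_le_s (y ay sy : V) : is_sup le y (- y) ay -> is_s le sle y sy -> le ay sy.
Proof.
move=> [_ _ ay_min] [u [l [[u0 yu _] [l0 yl _] ->]]].
apply: ay_min.
  by rewrite -[y]addr0; apply: (povs_add le_povs) => //; apply: sle_le.
by rewrite -[- y]add0r; apply: (povs_add le_povs) => //; apply: sle_le.
Qed.

Lemma s_le_double (x sx z : V) :
  is_s le sle x sx -> sle 0 z -> le x z -> le (- x) z -> le sx (z + z).
Proof.
by move=> [u [l [[_ _ u_min] [_ _ l_min] ->]]] z0 xz Nxz; apply: (povs_add le_povs);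
  [apply: u_min|apply: l_min].
Qed.

Lemma symmetric_solid_s (A : set V) (y sy : V) :
  symmetric_solid le sle A -> A y -> is_s le sle y sy -> A sy.
Proof.
move=> Ass Ay ys; have sy0 := is_s_ge0 ys.
exact: (Ass y sy sy sy Ay ys (is_s_id sy0) (povs_refl le_povs sy)).
Qed.

Lemma symmetric_solid_le (A : set V) (z x sx : V) :
  symmetric_solid le sle A -> A z -> sle 0 z -> is_s le sle x sx -> le sx z -> A x.
Proof. by move=> Ass Az z0 xs sxz; apply: (Ass z x z sx Az (is_s_id z0) xs sxz). Qed.

Definition solid_hull (B : set V) : set V :=
  [set x | exists y ax ay, [/\ B y, is_sup le x (- x) ax,
                                is_sup le y (- y) ay & le ax ay]].

Lemma sub_solid_hull (B : set V) :
  (forall y, exists ay, is_sup le y (- y) ay) -> B `<=` solid_hull B.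
Proof.
move=> abs_ex y By; have [ay yay] := abs_ex y.
by exists y, ay, ay; split=> //; exact: (povs_refl le_povs).
Qed.

Lemma solid_hull_solid (B : set V) : solid le (solid_hull B).
Proof.
move=> x y ax ay xax yay [y' [ay' [ay'' [By' yay' y'ay'' ay'ay'']]]] axay.
exists y', ax, ay''; split=> //; apply: (povs_trans le_povs axay).
by rewrite (is_sup_unique le_povs yay yay').
Qed.

Lemma solid_hull_sub (A B : set V) :
  symmetric_solid le sle A -> symmetric_solid le sle B ->
  (forall u v, B u -> B v -> A (u + v)) -> solid_hull B `<=` A.
Proof.
move=> Ass Bss BBA x [y [ax [ay [By [xax Nxax _] yay axay]]]].
have [sx xs] := is_s_exists x; have [sy ys] := is_s_exists y.
have sy0 := is_s_ge0 ys.
have le_ax_sy (w : V) : le w ax -> le w sy.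
  by move=> wax; apply: (povs_trans le_povs (povs_trans le_povs wax axay));
    exact: abs_le_s yay ys.
have Bsy := symmetric_solid_s Bss By ys.
apply: (symmetric_solid_le Ass (BBA _ _ Bsy Bsy) _ xs).
  exact: (povs_add_ge0 sle_povs sy0 sy0).
by apply: (s_le_double xs) => //; apply: le_ax_sy.
Qed.

End MixedLatticeVectorSpace.

Lemma nbhs0_add_split (M : TopologicalNmodule.type) (A : set M) :
  nbhs 0 A -> exists2 W : set M, nbhs 0 W & forall u v, W u -> W v -> A (u + v).
Proof.
move=> A0; have := @add_continuous M (0, 0).
rewrite /continuous_at /= addr0 => /(_ A A0)[[W1 W2] /= [W10 W20] W12A].
exists (W1 `&` W2); first exact: filterI.
by move=> u v [u1 _] [_ v2]; apply: (W12A (u, v)).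
Qed.

Theorem theorem4p9 (R : realType) (V : topologicalLmodType R)
  (le sle : V -> V -> Prop) :
  mixed_lattice_vs le sle -> is_lattice le ->
  has_zero_base (symmetric_solid le sle) ->
  has_zero_base (solid le).
Proof.
move=> [[le_povs sle_povs] upper_ex _ sle_le _] [sup_ex _] ss_base U U0.
have [A [A0 Ass AU]] := ss_base U U0.
have [W W0 WWA] := nbhs0_add_split A0.
have [B [B0 Bss BW]] := ss_base W W0.
exists (solid_hull le B); split.
- by apply: filterS B0; apply: (sub_solid_hull le_povs) => y; apply: sup_ex.
- exact: (solid_hull_solid le_povs).
- apply: subset_trans AU.
  apply: (solid_hull_sub le_povs sle_povs sle_le upper_ex Ass Bss).
  by move=> u v /BW Wu /BW Wv; apply: WWA.
Qed.
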